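(* Let $k\ge1$, $D_k=3k^2+3k+1$, and let $c\in P_k$. Let $\Delta=c+V(T_{D_k})=\{c+a\alpha_1+b\alpha_2 : 0\le b\le a\le D_k\}$. Then exactly $3k$ points of $P_k$ lie outside $\Delta$ and are at distance at most $k$ in $T_\infty$ from some vertex of $\Delta$.
   Context: Let $\alpha_1=(1,0)$ and $\alpha_2=(-\tfrac12,\tfrac{\sqrt3}{2})$. The triangular lattice $T_\infty$ is the infinite graph with vertex set $\{a\alpha_1+b\alpha_2 : a,b\in\mathbb Z\}$, two vertices being adjacent iff their Euclidean distance is $1$; distances are graph distances. For $d\ge0$, $T_d$ is the subgraph of $T_\infty$ induced by the vertices $a\alpha_1+b\alpha_2$ with $0\le b\le a\le d$. For $k\ge 1$, let $D_k=3k^2+3k+1$ and let $P_k$ (the pattern $P_{k+1,1}$) be the sublattice $\{x\,u+y\,v : x,y\in\mathbb Z\}$, where $u=(2k+1)\alpha_1+k\alpha_2$ and $v=(k+1)\alpha_1+(2k+1)\alpha_2$. *)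

From mathcomp Require Import all_boot all_order all_algebra.
Set Implicit Arguments. Unset Strict Implicit. Unset Printing Implicit Defensive.
Import Order.TTheory GRing.Theory Num.Theory.
Local Open Scope ring_scope.

(* A vertex a*alpha1 + b*alpha2 of the triangular lattice T_infty is encoded
   by its integer coordinates (a, b) : int * int (alpha1, alpha2 are linearly
   independent, so this is a bijection). *)
Definition vtx := (int * int)%type.

Definition vadd (p q : vtx) : vtx := (p.1 + q.1, p.2 + q.2).

(* Adjacency in T_infty: Euclidean distance 1.  The lattice vectors of norm 1
   are exactly +-alpha1, +-alpha2, +-(alpha1+alpha2). *)
Definition adjT (p q : vtx) : bool :=
  (q.1 - p.1, q.2 - p.2) \in
    ([:: (1, 0); (0, 1); (1, 1); (-1, 0); (0, -1); (-1, -1)] : seq vtx).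

Definition distT_le (p q : vtx) (n : nat) : Prop :=
  exists s : seq vtx, (size s <= n)%N /\ path adjT p s /\ last p s = q.

Definition Dk (k : nat) : nat := 3 * k ^ 2 + 3 * k + 1.

(* The pattern P_k = { x u + y v } with u = (2k+1) alpha1 + k alpha2 and
   v = (k+1) alpha1 + (2k+1) alpha2. *)
Definition inP (k : nat) (p : vtx) : Prop :=
  exists x y : int,
    p = (x * (2 * k + 1)%:R + y * (k + 1)%:R, x * k%:R + y * (2 * k + 1)%:R).

Definition inDelta (k : nat) (c p : vtx) : Prop :=
  exists a b : nat, (b <= a)%N /\ (a <= Dk k)%N /\ p = vadd c (a%:Z, b%:Z).

From mathcomp Require Import all_boot all_order all_algebra zify ring.

(* P_k is the kernel of (a, b) |-> a + (3k+1) b modulo D_k, and the ball of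
   radius n around 0 in T_infty is the hexagon |x|, |y|, |x - y| <= n.  After
   translating by c, a point within distance k of the triangle but outside it
   lies in a strip of width k along one of the three edges.  There the
   congruence, combined with (3k+1)(3k+2) = 3 D_k - 1, leaves exactly k points
   per edge: (j(3k+1), -j), (D_k + j, j(3k+2)) and (D_k - j(3k+2), D_k - j(3k+1))
   for 1 <= j <= k. *)

Set Implicit Arguments.
Unset Strict Implicit.
Unset Printing Implicit Defensive.

Import GRing.Theory Num.Theory.
Local Open Scope ring_scope.

Definition vsub (p q : vtx) : vtx := (p.1 - q.1, p.2 - q.2).

Lemma vaddK c : cancel (vadd c) (vsub^~ c).
Proof. by case=> a b; rewrite /vadd /vsub /=; congr (_, _); lia. Qed.

Lemma vsubK c : cancel (vsub^~ c) (vadd c).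
Proof. by case=> a b; rewrite /vadd /vsub /=; congr (_, _); lia. Qed.

Lemma vsub_translate c p q : vsub (vsub p c) (vsub q c) = vsub p q.
Proof. by rewrite /vsub /=; congr (_, _); ring. Qed.

Definition unit_steps : seq vtx :=
  [:: (1, 0); (0, 1); (1, 1); (-1, 0); (0, -1); (-1, -1)].

Lemma adjTE p q : adjT p q = (vsub q p \in unit_steps).
Proof. by []. Qed.

Definition in_hexagon (n : int) (d : vtx) : Prop :=
  -n <= d.1 <= n /\ -n <= d.2 <= n /\ -n <= d.1 - d.2 <= n.

Lemma unit_steps_hexagon e : e \in unit_steps -> in_hexagon 1 e.
Proof. by rewrite !inE => /orP[|/orP[|/orP[|/orP[|/orP[]]]]] /eqP->. Qed.

Lemma path_hexagon q s :
  path adjT q s -> in_hexagon (size s)%:Z (vsub (last q s) q).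
Proof.
elim: s q => [|x s IHs] q /=; first by move=> _; rewrite /in_hexagon /vsub /=; lia.
case/andP=> /unit_steps_hexagon + /IHs; rewrite /in_hexagon /vsub /=; lia.
Qed.

Lemma hexagon_step n d : in_hexagon n.+1%:Z d -> d != (0, 0) ->
  exists2 e, e \in unit_steps & in_hexagon n%:Z (vsub d e).
Proof.
case: d => x y; rewrite /in_hexagon /vsub /= xpair_eqE => hd hnz.
case: (ltrgtP x 0) => hx; case: (ltrgtP y 0) => hy.
- by exists (-1, -1); rewrite ?inE //=; lia.
- by exists (-1, 0); rewrite ?inE //=; lia.
- by exists (-1, 0); rewrite ?inE //=; lia.
- by exists (1, 0); rewrite ?inE //=; lia.
- by exists (1, 1); rewrite ?inE //=; lia.
- by exists (1, 0); rewrite ?inE //=; lia.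
- by exists (0, -1); rewrite ?inE //=; lia.
- by exists (0, 1); rewrite ?inE //=; lia.
- by rewrite hx hy !eqxx in hnz.
Qed.

Lemma hexagon_path n q d : in_hexagon n%:Z d ->
  exists s, [/\ (size s <= n)%N, path adjT q s & last q s = vadd q d].
Proof.
elim: n q d => [|n IHn] q d hd.
  exists [::]; split=> //=; case: d hd => x y; rewrite /in_hexagon /vadd /=.
  by case: q => a b /= hd; congr (_, _); lia.
have [->|/(hexagon_step hd)[e he /(IHn (vadd q e))[s [hs hp hl]]]] := eqVneq d (0, 0).
  by exists [::]; split=> //=; case: q => a b; rewrite /vadd /= !addr0.
exists (vadd q e :: s); split=> //=.
  by rewrite hp andbT adjTE vaddK.
rewrite hl; case: q {hp hl} => a b; case: e {he} => e1 e2; case: d {hd} => x y.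
by rewrite /vadd /vsub /=; congr (_, _); lia.
Qed.

Lemma distT_le_hexagon q p n : distT_le q p n <-> in_hexagon n%:Z (vsub p q).
Proof.
split=> [[s [hs [/path_hexagon hp <-]]]|/(hexagon_path q)[s [hs hp hl]]].
  by move: hp; rewrite /in_hexagon; lia.
by exists s; split=> //; split=> //; rewrite hl vsubK.
Qed.

Lemma dvdz_small_eq0 (d m : int) : (d %| m)%Z -> - d < m < d -> m = 0.
Proof. by case/dvdzP=> q -> hm; have [hq|hq|->] := ltrgtP q 0; nia. Qed.

Lemma Dk_int k : (Dk k)%:Z = 3 * k%:Z * k%:Z + 3 * k%:Z + 1.
Proof. rewrite /Dk; lia. Qed.

Definition pattern_form (k : nat) (p : vtx) : int := p.1 + (3 * k%:Z + 1) * p.2.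

Definition in_pattern (k : nat) (p : vtx) : Prop := ((Dk k)%:Z %| pattern_form k p)%Z.

Lemma inP_pattern k p : inP k p <-> in_pattern k p.
Proof.
rewrite /in_pattern /pattern_form Dk_int; split=> [[x [y ->]] | /dvdzP[t ht]] /=.
  by apply/dvdzP; exists (x + 2 * y); rewrite !(natrD, natrM); ring.
exists (t - 2 * p.2 + 2 * k%:Z * t), (p.2 - k%:Z * t).
by case: p ht => a b /= ht; congr (_, _); rewrite !(natrD, natrM); nia.
Qed.

Lemma in_patternB k c p :
  in_pattern k c -> in_pattern k (vsub p c) <-> in_pattern k p.
Proof.
rewrite /in_pattern => hc.
have -> : pattern_form k (vsub p c) = pattern_form k p - pattern_form k c.
  by rewrite /pattern_form /=; ring.
by rewrite rpredBr.
Qed.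

Definition in_triangle (n : int) (d : vtx) : Prop := 0 <= d.2 <= d.1 /\ d.1 <= n.

Definition in_fringe (n r : int) (d : vtx) : Prop :=
  ~ in_triangle n d /\ exists2 e, in_triangle n e & in_hexagon r (vsub d e).

Lemma inDelta_triangle k c p : inDelta k c p <-> in_triangle (Dk k)%:Z (vsub p c).
Proof.
rewrite /in_triangle /vsub; split=> [[a [b [hba [ha ->]]]] | /= h] /=.
  by rewrite /vadd /=; lia.
exists `|p.1 - c.1|%N, `|p.2 - c.2|%N; do 2?split; try lia.
by case: p h => a b /= h; rewrite /vadd /=; congr (_, _); lia.
Qed.

Section Border.

Variable k : nat.

Local Notation K := k%:Z.
Local Notation D := (3 * K * K + 3 * K + 1).

Lemma below_bottom_edge a b : (D %| pattern_form k (a, b))%Z ->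
  - K <= b < 0 -> - K <= a <= D + K -> a = - b * (3 * K + 1).
Proof.
move=> hm hb ha; apply: subr0_eq; apply: (@dvdz_small_eq0 D); last by nia.
have -> : a - - b * (3 * K + 1) = pattern_form k (a, b).
  by rewrite /pattern_form /=; ring.
exact: hm.
Qed.

Lemma right_of_right_edge a b : (D %| pattern_form k (a, b))%Z ->
  0 <= b <= D + K -> D < a <= D + K -> b = (a - D) * (3 * K + 2).
Proof.
move=> hm hb ha; apply: subr0_eq; apply: (@dvdz_small_eq0 D); last by nia.
have -> : b - (a - D) * (3 * K + 2)
          = (3 * b + 3 * K + 2) * D - (3 * K + 2) * pattern_form k (a, b).
  by rewrite /pattern_form /=; ring.
by rewrite rpredB ?dvdz_mull ?dvdzz.
Qed.

Lemma above_diagonal a b : (D %| pattern_form k (a, b))%Z ->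
  - K <= a <= D -> 1 <= b - a <= K -> a = D - (b - a) * (3 * K + 2).
Proof.
move=> hm ha hab; apply: subr0_eq; apply: (@dvdz_small_eq0 D); last by nia.
have -> : a - (D - (b - a) * (3 * K + 2))
          = (3 * b - 1) * D - (3 * K + 1) * pattern_form k (a, b).
  by rewrite /pattern_form /=; ring.
by rewrite rpredB ?dvdz_mull ?dvdzz.
Qed.

Definition bottom_pt (j : int) : vtx := (j * (3 * K + 1), - j).
Definition right_pt (j : int) : vtx := (D + j, j * (3 * K + 2)).
Definition diag_pt (j : int) : vtx := (D - j * (3 * K + 2), D - j * (3 * K + 1)).

Definition border_pts : seq vtx :=
  [seq bottom_pt j%:Z | j <- iota 1 k] ++ [seq right_pt j%:Z | j <- iota 1 k]
  ++ [seq diag_pt j%:Z | j <- iota 1 k].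

Lemma size_border_pts : size border_pts = (3 * k)%N.
Proof. by rewrite !size_cat !size_map size_iota; lia. Qed.

Lemma uniq_border_pts : uniq border_pts.
Proof.
rewrite !cat_uniq !has_cat !map_inj_in_uniq ?iota_uniq /= ?andbT; first last.
- by move=> x y /[!mem_iota] hx hy [hxy _]; apply/eqP; nia.
- by move=> x y /[!mem_iota] hx hy [hxy _]; apply/eqP; nia.
- by move=> x y /[!mem_iota] hx hy [_ hxy]; apply/eqP; nia.
rewrite negb_or -!all_predC -andbA; apply/and3P.
by split; apply/allP => _ /mapP[i /[!mem_iota] hi ->];
  apply/mapP => -[j /[!mem_iota] hj [h1 h2]]; nia.
Qed.

Lemma mem_border_pts d : d \in border_pts <->
  exists2 j : nat, (0 < j <= k)%N & [\/ d = bottom_pt j, d = right_pt j | d = diag_pt j].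
Proof.
rewrite !mem_cat; split.
  case/or3P=> /mapP[j /[!mem_iota] hj ->]; exists j; try lia.
  - exact: Or31.
  - exact: Or32.
  - exact: Or33.
case=> j hj [] ->; apply/or3P; [constructor 1 | constructor 2 | constructor 3];
  by apply: map_f; rewrite mem_iota; lia.
Qed.

Lemma border_pts_fringe d : d \in border_pts ->
  (D %| pattern_form k d)%Z /\ in_fringe D K d.
Proof.
rewrite /in_fringe /in_triangle /in_hexagon /pattern_form.
case/mem_border_pts=> j hj [] -> /=.
- split; first by apply/dvdzP; exists 0; ring.
  by split; [lia | exists (j%:Z * (3 * K + 1), 0) => /=; nia].
- split; first by apply/dvdzP; exists (1 + 3 * j%:Z); ring.
  by split; [lia | exists (D, j%:Z * (3 * K + 2)) => /=; nia].
- split; first by apply/dvdzP; exists (3 * K + 2 - 3 * j%:Z); ring.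
  split; first nia.
  by exists (D - j%:Z * (3 * K + 1), D - j%:Z * (3 * K + 1)) => /=; nia.
Qed.

Lemma fringe_border_pts d :
  (D %| pattern_form k d)%Z -> in_fringe D K d -> d \in border_pts.
Proof.
case: d => a b hm [hnt [[ea eb] he hh]]; apply/mem_border_pts.
move: hnt he hh; rewrite /in_triangle /in_hexagon /vsub /= => hnt he hh.
have [hb|hb] := ltrP b 0.
  have ha := below_bottom_edge hm (ltac:(lia)) (ltac:(nia)).
  by exists `|b|%N; [lia | constructor 1; rewrite /bottom_pt ha; congr (_, _); lia].
have [ha|ha] := ltrP D a.
  have hb' := right_of_right_edge hm (ltac:(nia)) (ltac:(nia)).
  exists `|a - D|%N; first nia.
  by constructor 2; rewrite /right_pt hb'; congr (_, _); lia.
have ha' := above_diagonal hm (ltac:(lia)) (ltac:(lia)).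
by exists `|b - a|%N; [lia | constructor 3; rewrite /diag_pt; congr (_, _); lia].
Qed.

End Border.

Lemma border_ptsP k d :
  d \in border_pts k <-> in_pattern k d /\ in_fringe (Dk k)%:Z k%:Z d.
Proof.
rewrite /in_pattern Dk_int.
by split=> [/border_pts_fringe | [hm /(fringe_border_pts hm)]].
Qed.

Lemma fringe_Delta k c p : in_fringe (Dk k)%:Z k%:Z (vsub p c) <->
  ~ inDelta k c p /\ exists q, inDelta k c q /\ distT_le q p k.
Proof.
split=> [[hp [e he hpe]] | [hp [q [hq hpq]]]]; split.
- by move/inDelta_triangle.
- exists (vadd c e); rewrite inDelta_triangle distT_le_hexagon.
  by rewrite vaddK -(vsub_translate c p) vaddK.
- by move/inDelta_triangle.
- exists (vsub q c); first exact/inDelta_triangle.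
  by rewrite vsub_translate -distT_le_hexagon.
Qed.

Theorem lemma2 (k : nat) (hk : (1 <= k)%N) (c : vtx) (hc : inP k c) :
  exists s : seq vtx,
    uniq s /\ size s = (3 * k)%N /\
    (forall p : vtx,
        p \in s <->
        (inP k p /\ ~ inDelta k c p /\
         exists q : vtx, inDelta k c q /\ distT_le q p k)).
Proof.
move/inP_pattern: hc => hc.
exists [seq vadd c d | d <- border_pts k]; split.
  by rewrite (map_inj_uniq (can_inj (vaddK c))) uniq_border_pts.
split=> [|p]; first by rewrite size_map size_border_pts.
rewrite -{1}(vsubK c p) (mem_map (can_inj (vaddK c))) border_ptsP.
by rewrite in_patternB // inP_pattern fringe_Delta.
Qed.
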